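(* Let $p$ be a prime and let $\lambda\vdash n$, $\mu\vdash m$ ($n,m\ge0$) be $p$-deprived partitions having no part in common. Then $g_{\lambda\mu}=g_\lambda g_\mu$ in $\Lambda_{\mathbb{Q}}$. Consequently, for every $p$-deprived partition $\lambda$, $g_\lambda=\prod_{u\ge1,\,p\nmid u}g_{(u)^{r_u(\lambda)}}$.
   Context: $\Lambda_{\mathbb{Q}}$ is the ring of symmetric functions in $x_1,x_2,\dots$ over $\mathbb{Q}$; $p_s=\sum_ix_i^s$. For a partition $\lambda$ (written $\lambda\vdash n$ if its parts sum to $n$), $r_a(\lambda)$ is the number of parts equal to $a$, $p_\lambda=\prod p_{\lambda_i}$ over nonzero parts, $z_\lambda=\prod_{a\ge1}a^{r_a(\lambda)}r_a(\lambda)!$, and $(-1)^\lambda=(-1)^{\sum_i(\lambda_i-1)}$. The product $\lambda\mu$ of partitions is the partition whose multiset of parts is the union of those of $\lambda$ and $\mu$; $(u)^r$ is the partition with $r$ parts equal to $u$. A partition $\mu$ is a $p$-splitting of $\lambda$ if $\mu$ is obtained from $\lambda$ by replacing one part $pu$ ($u\ge1$) by $p$ parts equal to $u$; $p$-equivalence $\sim_p$ is the equivalence relation on partitions of $n$ generated by $p$-splitting. A partition is $p$-deprived if none of its parts is divisible by $p$. Define $g_\lambda:=\sum_{\mu\sim_p\lambda}(-1)^\mu\frac{p_\mu}{z_\mu}$. *)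

From HB Require Import structures.
From mathcomp Require Import all_boot all_order all_algebra.
From mathcomp Require Import mpoly.
From Stdlib Require Import ClassicalEpsilon Relation_Operators.
Set Implicit Arguments. Unset Strict Implicit. Unset Printing Implicit Defensive.
Import Order.TTheory GRing.Theory Num.Theory.

Definition pbool (P : Prop) : bool :=
  if excluded_middle_informative P then true else false.

Definition is_partition (l : seq nat) : bool := sorted geq l && all (leq 1) l.
Definition is_partition_of (n : nat) (l : seq nat) : bool :=
  is_partition l && (sumn l == n).

Definition part_candidates (n : nat) : seq (seq nat) :=
  flatten [seq [seq map (@nat_of_ord n.+1) (tval t) | t : k.-tuple 'I_n.+1]
          | k <- iota 0 n.+1].

Definition partitions (n : nat) : seq (seq nat) :=
  undup (filter (is_partition_of n) (part_candidates n)).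

Definition mult (a : nat) (l : seq nat) : nat := count_mem a l.

(* product of partitions: union of multisets of parts *)
Definition pprod (l m : seq nat) : seq nat := sort geq (l ++ m).

Definition psplit (p : nat) (lam mu : seq nat) : Prop :=
  is_partition lam /\ is_partition mu /\
  exists u, 1 <= u /\ (p * u \in lam) /\ perm_eq mu (nseq p u ++ rem (p * u) lam).

Definition pequiv (p : nat) (lam mu : seq nat) : Prop :=
  clos_refl_sym_trans (seq nat) (psplit p) lam mu.

Definition p_deprived (p : nat) (l : seq nat) : bool := all (fun a => ~~ (p %| a)) l.

Definition zee (l : seq nat) : nat :=
  \prod_(a <- undup l) (a ^ mult a l * (mult a l)`!).

Definition psign (l : seq nat) : rat := (-1) ^+ (sumn l - size l).

Local Open Scope ring_scope.

Definition psum (N s : nat) : {mpoly rat[N]} := \sum_(i < N) 'X_i ^+ s.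

Definition pmon (N : nat) (l : seq nat) : {mpoly rat[N]} := \prod_(a <- l) psum N a.

Definition gfun (N p : nat) (lam : seq nat) : {mpoly rat[N]} :=
  \sum_(mu <- partitions (sumn lam) | pbool (pequiv p lam mu))
     ((psign mu / (zee mu)%:R) *: pmon N mu).

From HB Require Import structures.
From mathcomp Require Import all_boot all_order all_algebra.
From mathcomp Require Import mpoly zify.
From Stdlib Require Import ClassicalEpsilon Relation_Operators.
Set Implicit Arguments. Unset Strict Implicit. Unset Printing Implicit Defensive.
Import GRing.Theory.

(* Splitting every part a = p^k b (p not dividing b) into p^k parts b sends a
   partition to a p-deprived one; this is invariant under p-splitting, and a
   partition is p-equivalent to its full splitting.  Hence the p-class of a
   p-deprived lambda consists of the partitions whose full splitting is lambda.
   If lambda and mu are p-deprived with disjoint parts, every member of the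
   class of lambda mu is uniquely the union of a member of the class of lambda
   (the parts whose p'-part lies in lambda) and one of the class of mu; as
   z, the sign and p_ are multiplicative on unions of partitions with disjoint
   parts, g_{lambda mu} = g_lambda g_mu.  The factorisation of g_lambda follows
   by peeling off the parts of maximal size. *)

Lemma geq_trans : transitive geq.
Proof. exact: rev_trans leq_trans. Qed.

Lemma geq_anti : antisymmetric geq.
Proof. by move=> m n; rewrite andbC => /anti_leq. Qed.

Lemma geq_total : total geq.
Proof. by move=> m n; apply: leq_total. Qed.

Lemma filter_in_pred0 (T : eqType) (q : pred T) s :
  {in s, forall x, ~~ q x} -> filter q s = [::].
Proof. by move=> qs; rewrite -(filter_pred0 s); apply: eq_in_filter => x /qs /negbTE. Qed.

Lemma sort_geq_perm (s t : seq nat) : sorted geq t -> perm_eq s t -> sort geq s = t.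
Proof.
move=> st pst; apply: (sorted_eq geq_trans geq_anti) => //.
  exact: sort_sorted geq_total s.
by rewrite perm_sort.
Qed.

Lemma size_le_sumn (l : seq nat) : all (leq 1) l -> size l <= sumn l.
Proof. by elim: l => //= a l IH /andP [a0 /IH]; rewrite -add1n; apply: leq_add. Qed.

Lemma is_partition_sort (l : seq nat) : all (leq 1) l -> is_partition (sort geq l).
Proof. by move=> l1; rewrite /is_partition (sort_sorted geq_total) all_sort. Qed.

Lemma is_partition_filter (q : pred nat) (l : seq nat) :
  is_partition l -> is_partition (filter q l).
Proof.
case/andP=> sl l1; rewrite /is_partition (sorted_filter geq_trans) //=.
by apply/allP => a; rewrite mem_filter => /andP [_ /(allP l1)].
Qed.

Lemma is_partition_nseq n u : 0 < u -> is_partition (nseq n u).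
Proof.
move=> u0; rewrite /is_partition all_nseq u0 orbT andbT.
by elim: n => [|[|n] IH] //=; rewrite leqnn.
Qed.

Lemma perm_pprod (l m : seq nat) : perm_eq (pprod l m) (l ++ m).
Proof. by rewrite perm_sort. Qed.

Lemma is_partition_pprod (l m : seq nat) :
  all (leq 1) l -> all (leq 1) m -> is_partition (pprod l m).
Proof. by move=> l1 m1; apply: is_partition_sort; rewrite all_cat l1. Qed.

Lemma mem_part_candidates n l : is_partition_of n l -> l \in part_candidates n.
Proof.
case/andP=> /andP [_ l1] /eqP sl.
have l_small : all (fun a => a < n.+1) l.
  apply/allP => a al; rewrite ltnS -sl.
  by rewrite (perm_sumn (perm_to_rem al)) /= leq_addr.
apply/flattenP; exists [seq map (@nat_of_ord n.+1) (tval t) | t : (size l).-tuple 'I_n.+1].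
  by apply/mapP; exists (size l); rewrite // mem_iota /= ltnS -sl size_le_sumn.
apply/mapP; exists (map_tuple (@inord n) (in_tuple l)); first by rewrite mem_enum.
rewrite /= -map_comp -[LHS]map_id; apply/eq_in_map => a al /=.
by rewrite inordK // (allP l_small).
Qed.

Lemma mem_partitions n l : (l \in partitions n) = is_partition_of n l.
Proof.
rewrite /partitions mem_undup mem_filter.
by case: (boolP (is_partition_of n l)) => //= /mem_part_candidates.
Qed.

Lemma pboolP (P : Prop) : reflect P (pbool P).
Proof. by rewrite /pbool; case: excluded_middle_informative => h; constructor. Qed.

Section PDeprive.

Variable p : nat.
Hypothesis p_pr : prime p.

Definition pdeprive (l : seq nat) : seq nat :=
  flatten [seq nseq a`_p a`_p^' | a <- l].

Lemma pdeprive_cons a l : pdeprive (a :: l) = nseq a`_p a`_p^' ++ pdeprive l.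
Proof. by []. Qed.

Lemma pdeprive1 a : pdeprive [:: a] = nseq a`_p a`_p^'.
Proof. by rewrite pdeprive_cons cats0. Qed.

Lemma pdeprive_cat s t : pdeprive (s ++ t) = pdeprive s ++ pdeprive t.
Proof. by rewrite /pdeprive map_cat flatten_cat. Qed.

Lemma perm_pdeprive s t : perm_eq s t -> perm_eq (pdeprive s) (pdeprive t).
Proof. by move=> st; apply/perm_flatten/perm_map. Qed.

Lemma pdeprive_nseq n u : pdeprive (nseq n u) = nseq (n * u`_p) u`_p^'.
Proof. by elim: n => //= n IH; rewrite pdeprive_cons IH mulSn nseqD. Qed.

Lemma pdeprive_pmul u : 0 < u -> pdeprive [:: p * u] = pdeprive (nseq p u).
Proof.
move=> u0; have p0 := prime_gt0 p_pr.
rewrite pdeprive1 pdeprive_nseq; congr nseq.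
- by rewrite partnM // part_pnat_id ?pnat_id.
- by rewrite partnM // (@part_p'nat p^') ?mul1n // pnatNK pnat_id.
Qed.

Lemma pdeprive_id l : p_deprived p l -> pdeprive l = l.
Proof.
elim: l => //= a l IH /andP [pa /IH]; rewrite pdeprive_cons => ->.
have a_p' : p^'.-nat a by rewrite p'natE.
by rewrite part_p'nat // part_pnat_id.
Qed.

Lemma sumn_pdeprive l : all (leq 1) l -> sumn (pdeprive l) = sumn l.
Proof.
elim: l => //= a l IH /andP [a0 /IH]; rewrite pdeprive_cons sumn_cat sumn_nseq => ->.
by rewrite mulnC partnC.
Qed.

Lemma p'part_mem_pdeprive a l : a \in l -> a`_p^' \in pdeprive l.
Proof.
elim: l => //= b l IH; rewrite inE pdeprive_cons mem_cat.
case/predU1P=> [-> | /IH ->]; last by rewrite orbT.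
by rewrite mem_nseq part_gt0 eqxx.
Qed.

Lemma pdeprive_filter (q : pred nat) l :
  pdeprive [seq a <- l | q a`_p^'] = [seq b <- pdeprive l | q b].
Proof.
elim: l => //= a l IH; rewrite pdeprive_cons filter_cat filter_nseq -IH.
by case: (q _); rewrite ?mul1n ?mul0n.
Qed.

Lemma psplit_pdeprive x y : psplit p x y -> perm_eq (pdeprive x) (pdeprive y).
Proof.
case=> _ [_ [u [u0 [pux y_perm]]]].
rewrite (permPl (perm_pdeprive (perm_to_rem pux))) pdeprive_cons -pdeprive1.
by rewrite pdeprive_pmul // -pdeprive_cat perm_sym perm_pdeprive.
Qed.

Lemma pequiv_pdeprive x y : pequiv p x y -> perm_eq (pdeprive x) (pdeprive y).
Proof.
elim=> {x y} [x y /psplit_pdeprive // | x | x y _ | x y z _ xy _ yz].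
- exact: perm_refl.
- by rewrite perm_sym.
- exact: perm_trans xy yz.
Qed.

Lemma psplit_exists x a : is_partition x -> a \in x -> p %| a ->
  exists y, [/\ psplit p x y, is_partition y, sumn y = sumn x & size x < size y].
Proof.
move=> px xa pa; have x_perm := perm_to_rem xa.
have /andP [_ x1] := px; have a0 := allP x1 a xa.
have /andP [_ r1] : all (leq 1) (a :: rem a x) by rewrite -(perm_all _ x_perm).
have [u au] : exists u, a = p * u by exists (a %/ p); rewrite mulnC divnK.
have u0 : 0 < u by move: a0; rewrite au muln_gt0 => /andP [].
have py : is_partition (pprod (nseq p u) (rem a x)).
  by apply: is_partition_pprod; rewrite // all_nseq u0 orbT.
exists (pprod (nseq p u) (rem a x)); split=> //.
- by split=> //; split=> //; exists u; rewrite -au perm_pprod.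
- by rewrite (perm_sumn (perm_pprod _ _)) (perm_sumn x_perm) sumn_cat sumn_nseq /= au mulnC.
- rewrite (perm_size (perm_pprod _ _)) (perm_size x_perm) size_cat size_nseq /=.
  by have := prime_gt1 p_pr; lia.
Qed.

Lemma pequiv_sort_pdeprive x : is_partition x -> pequiv p x (sort geq (pdeprive x)).
Proof.
have [n] := ubnP (sumn x - size x); elim: n x => // n IH x; rewrite ltnS => xn px.
have [/hasP [a xa pa] | no_p] := boolP (has (fun a => p %| a) x).
- have [y [xy py sumn_y size_y]] := psplit_exists px xa pa.
  have -> : sort geq (pdeprive x) = sort geq (pdeprive y).
    exact/(perm_sortP geq_total geq_trans geq_anti)/psplit_pdeprive.
  have y_small : sumn y - size y < n by have /andP [_ /size_le_sumn] := py; lia.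
  exact: rst_trans _ _ _ y _ (rst_step _ _ _ _ xy) (IH y y_small py).
- rewrite pdeprive_id; last by rewrite /p_deprived all_predC.
  rewrite sorted_sort; [exact: rst_refl | exact: geq_trans | by case/andP: px].
Qed.

Lemma pequiv_deprivedE lam y : is_partition lam -> p_deprived p lam -> is_partition y ->
  pequiv p lam y <-> perm_eq (pdeprive y) lam.
Proof.
move=> pl dl py; split.
- by move/pequiv_pdeprive; rewrite pdeprive_id // perm_sym.
- move=> y_lam; apply: rst_sym; have := pequiv_sort_pdeprive py.
  by rewrite (sort_geq_perm _ y_lam) //; case/andP: pl.
Qed.

Definition pclass (l : seq nat) : seq (seq nat) :=
  [seq mu <- partitions (sumn l) | pbool (pequiv p l mu)].

Lemma uniq_pclass l : uniq (pclass l).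
Proof. by rewrite filter_uniq // undup_uniq. Qed.

Lemma mem_pclass l y : is_partition l -> p_deprived p l ->
  (y \in pclass l) = is_partition y && perm_eq (pdeprive y) l.
Proof.
move=> pl dl; rewrite mem_filter mem_partitions /is_partition_of.
have [py /= | _] := boolP (is_partition y); last by rewrite andbF.
apply/andP/idP => [[/pboolP /(pequiv_deprivedE pl dl py) //] | y_lam].
split; first exact/pboolP/(pequiv_deprivedE pl dl py).
by case/andP: py => _ y1; rewrite -(perm_sumn y_lam) sumn_pdeprive.
Qed.

Lemma is_partition_pclass l y : y \in pclass l -> is_partition y.
Proof. by rewrite mem_filter mem_partitions => /andP [_ /andP []]. Qed.

Lemma pclass_nil : perm_eq (pclass [::]) [:: [::]].
Proof.
apply: uniq_perm; rewrite ?uniq_pclass // => y.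
rewrite mem_pclass // inE; apply/idP/eqP => [/andP [/andP [_ y1] y_nil] | -> //].
apply/size0nil/eqP; rewrite -leqn0 (leq_trans (size_le_sumn y1)) //.
by rewrite -(sumn_pdeprive y1) (perm_sumn y_nil).
Qed.

Lemma p'part_mem_pclass l y a : is_partition l -> p_deprived p l ->
  y \in pclass l -> a \in y -> a`_p^' \in l.
Proof.
move=> pl dl; rewrite mem_pclass // => /andP [_ y_l] ay.
by rewrite -(perm_mem y_l) p'part_mem_pdeprive.
Qed.

Section DisjointProduct.

Variables L M : seq nat.
Hypotheses (pL : is_partition L) (pM : is_partition M).
Hypotheses (dL : p_deprived p L) (dM : p_deprived p M).
Hypothesis LM : forall a, a \in L -> a \notin M.

Let inL a := a`_p^' \in L.

Lemma pclass_disjoint y1 y2 a : y1 \in pclass L -> y2 \in pclass M ->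
  a \in y1 -> a \notin y2.
Proof.
move=> y1L y2M a1; apply/negP => a2.
by have := LM (p'part_mem_pclass pL dL y1L a1); rewrite (p'part_mem_pclass pM dM y2M a2).
Qed.

Lemma filter_pclass_pprod y1 y2 : y1 \in pclass L -> y2 \in pclass M ->
  filter inL (pprod y1 y2) = y1 /\ filter (predC inL) (pprod y1 y2) = y2.
Proof.
move=> y1L y2M.
have /andP [s1 _] := is_partition_pclass y1L.
have /andP [s2 _] := is_partition_pclass y2M.
have inL1 a : a \in y1 -> inL a by apply: p'part_mem_pclass y1L.
have outL2 a : a \in y2 -> ~~ inL a.
  by move/(p'part_mem_pclass pM dM y2M); apply: contraL; apply: LM.
rewrite /pprod !(filter_sort geq_total geq_trans) !filter_cat.
rewrite (all_filterP (introT allP inL1)) (all_filterP (introT allP outL2)).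
have -> : filter inL y2 = [::] by apply: filter_in_pred0.
have -> : filter (predC inL) y1 = [::] by apply: filter_in_pred0 => a /inL1 /= ->.
by rewrite cats0 !sorted_sort //; exact: geq_trans.
Qed.

Lemma mem_pclass_pprod y :
  (y \in pclass (pprod L M)) = (y \in [seq pprod y1 y2 | y1 <- pclass L, y2 <- pclass M]).
Proof.
have [/andP [_ L1] /andP [_ M1]] := conj pL pM.
have dLM : p_deprived p (pprod L M).
  by rewrite /p_deprived (perm_all _ (perm_pprod L M)) all_cat; apply/andP.
rewrite mem_pclass ?is_partition_pprod //; apply/idP/allpairsP.
- case/andP=> py y_LMs; have y_LM := perm_trans y_LMs (perm_pprod L M).
  have L_M a : a \in M -> a \notin L by apply: contraL; apply: LM.
  have filter_L : filter (fun b => b \in L) (L ++ M) = L.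
    by rewrite filter_cat (all_filterP (allss L)) (filter_in_pred0 L_M) cats0.
  have filter_M : filter (fun b => b \notin L) (L ++ M) = M.
    by rewrite filter_cat (all_filterP (introT allP L_M)) filter_in_pred0 // => a /= ->.
  exists (filter inL y, filter (predC inL) y); split => /=.
  + rewrite mem_pclass // is_partition_filter //= (pdeprive_filter (fun b => b \in L)).
    by rewrite (permPl (perm_filter _ y_LM)) filter_L.
  + rewrite mem_pclass // is_partition_filter //= (pdeprive_filter (fun b => b \notin L)).
    by rewrite (permPl (perm_filter _ y_LM)) filter_M.
  + apply/esym/sort_geq_perm; first by case/andP: py.
    by rewrite (perm_filterC inL).
- case=> [[y1 y2]] /= [y1L y2M ->].
  move: y1L y2M; rewrite !mem_pclass // => /andP [/andP [_ y1_1] y1_L] /andP [/andP [_ y2_1] y2_M].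
  rewrite is_partition_pprod //= (permPl (perm_pdeprive (perm_pprod _ _))) pdeprive_cat.
  by rewrite (permPr (perm_pprod L M)) perm_cat.
Qed.

Lemma perm_pclass_pprod :
  perm_eq (pclass (pprod L M)) [seq pprod y1 y2 | y1 <- pclass L, y2 <- pclass M].
Proof.
apply: uniq_perm; [exact: uniq_pclass | | exact: mem_pclass_pprod].
apply: allpairs_uniq; [exact: uniq_pclass | exact: uniq_pclass |].
move=> _ _ /allpairsP [[y1 y2] [/= y1L y2M ->]] /allpairsP [[z1 z2] [/= z1L z2M ->]] /= yz.
have [fy1 fy2] := filter_pclass_pprod y1L y2M.
have [fz1 fz2] := filter_pclass_pprod z1L z2M.
move: (congr1 (filter inL) yz) (congr1 (filter (predC inL)) yz).
by rewrite fy1 fy2 fz1 fz2 => -> ->.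
Qed.

End DisjointProduct.

End PDeprive.

Lemma filter_pred1_nseq (x : nat) s : filter (pred1 x) s = nseq (count_mem x s) x.
Proof. by elim: s => //= a s ->; case: eqP => [->|]. Qed.

Lemma pprod_filter_leq lam M : is_partition lam -> all (fun a => a <= M.+1) lam ->
  lam = pprod [seq a <- lam | a <= M] (nseq (mult M.+1 lam) M.+1).
Proof.
move=> /andP [s_lam _] lam_M; apply/esym/sort_geq_perm => //.
have -> : nseq (mult M.+1 lam) M.+1 = [seq a <- lam | ~~ (a <= M)].
  rewrite /mult -filter_pred1_nseq; apply: eq_in_filter => a /(allP lam_M) aM /=.
  by rewrite -ltnNge eqn_leq aM.
by rewrite perm_sym -(perm_filterC (fun a => a <= M)); exact: perm_refl.
Qed.

Lemma zee_perm s t : perm_eq s t -> zee s = zee t.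
Proof.
move=> st; rewrite /zee (perm_big _ (perm_undup (perm_mem st))).
by apply: eq_bigr => a _; rewrite /mult (permP st).
Qed.

Lemma zee_cat s t : (forall a, a \in s -> a \notin t) -> zee (s ++ t) = zee s * zee t.
Proof.
move=> st; rewrite /zee.
have undup_st : perm_eq (undup (s ++ t)) (undup s ++ undup t).
  apply: uniq_perm; rewrite ?undup_uniq //.
    rewrite cat_uniq !undup_uniq /= andbT; apply/hasPn => a; rewrite !mem_undup => at'.
    by apply/negP => /st; rewrite at'.
  by move=> a; rewrite mem_undup !mem_cat !mem_undup.
rewrite (perm_big _ undup_st) big_cat /=.
congr (_ * _); apply: eq_big_seq => a; rewrite mem_undup => a_in.
  by rewrite /mult count_cat (count_memPn (st a a_in)) addn0.
have a_t : a \notin s by apply/negP => /st; rewrite a_in.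
by rewrite /mult count_cat (count_memPn a_t).
Qed.

Local Open Scope ring_scope.

Lemma psign_cat s t : all (leq 1) s -> all (leq 1) t ->
  psign (s ++ t) = psign s * psign t.
Proof.
move=> /size_le_sumn s1 /size_le_sumn t1.
by rewrite /psign sumn_cat size_cat -exprD; congr (_ ^+ _); lia.
Qed.

Lemma pmon_cat N s t : pmon N (s ++ t) = pmon N s * pmon N t.
Proof. by rewrite /pmon big_cat. Qed.

Definition gterm N (mu : seq nat) : {mpoly rat[N]} :=
  (psign mu / (zee mu)%:R) *: pmon N mu.

Lemma gterm_perm N s t : perm_eq s t -> gterm N s = gterm N t.
Proof.
move=> st; rewrite /gterm /psign /pmon (zee_perm st) (perm_sumn st) (perm_size st).
by rewrite (perm_big _ st).
Qed.

Lemma gterm_pprod N s t : all (leq 1) s -> all (leq 1) t ->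
  (forall a, a \in s -> a \notin t) -> gterm N (pprod s t) = gterm N s * gterm N t.
Proof.
move=> s1 t1 st; rewrite (gterm_perm N (perm_pprod s t)) /gterm.
rewrite zee_cat // psign_cat // pmon_cat -scalerAl -scalerAr scalerA natrM invfM.
by congr (_ *: _); rewrite mulrACA.
Qed.

Lemma gfunE N p l : gfun N p l = \sum_(mu <- pclass p l) gterm N mu.
Proof. by rewrite /gfun /pclass big_filter. Qed.

Lemma gfun_pprod N p L M : prime p -> is_partition L -> is_partition M ->
  p_deprived p L -> p_deprived p M -> (forall a, a \in L -> a \notin M) ->
  gfun N p (pprod L M) = gfun N p L * gfun N p M.
Proof.
move=> p_pr pL pM dL dM LM.
rewrite !gfunE (perm_big _ (perm_pclass_pprod p_pr pL pM dL dM LM)).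
rewrite big_allpairs_dep /= big_distrlr /=.
apply: eq_big_seq => y1 y1L; apply: eq_big_seq => y2 y2M.
have /andP [_ y1_1] := is_partition_pclass y1L.
have /andP [_ y2_1] := is_partition_pclass y2M.
by apply: gterm_pprod => // a; exact: (pclass_disjoint p_pr pL pM dL dM LM y1L y2M).
Qed.

Lemma gfun_nil N p : prime p -> gfun N p [::] = 1.
Proof.
move=> p_pr; rewrite gfunE (perm_big _ (pclass_nil p_pr)) big_seq1.
by rewrite /gterm /psign /zee /pmon !big_nil expr0 divr1 scale1r.
Qed.

Lemma gfun_prod_nseq N p M lam : prime p -> is_partition lam -> p_deprived p lam ->
  all (fun a => a <= M)%N lam ->
  gfun N p lam = \prod_(1 <= u < M.+1 | ~~ (p %| u)%N) gfun N p (nseq (mult u lam) u).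
Proof.
move=> p_pr; elim: M lam => [|M IH] lam pl dl lam_M.
  have -> : lam = [::].
    by case: lam pl dl lam_M => // a l /andP [_ /andP [a0 _]] _ /andP [/(leq_trans a0)].
  by rewrite big_geq // gfun_nil.
rewrite big_mkcond big_nat_recr //= -big_mkcond.
have [pM | p'M] := boolP (p %| M.+1)%N.
  rewrite mulr1; apply: IH => //; apply/allP => a al.
  have := allP lam_M a al; rewrite leq_eqVlt ltnS => /predU1P [aM|//].
  by have := allP dl a al; rewrite aM pM.
set lam' := [seq a <- lam | (a <= M)%N].
have pl' : is_partition lam' by apply: is_partition_filter.
have dl' : p_deprived p lam'.
  by apply/allP => a; rewrite mem_filter => /andP [_ /(allP dl)].
rewrite {1}(pprod_filter_leq pl lam_M) gfun_pprod //; first last.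
- by move=> a; rewrite mem_filter mem_nseq => /andP [aM _]; apply/negP => /andP [_ /eqP]; lia.
- by rewrite /p_deprived all_nseq p'M orbT.
- exact: is_partition_nseq.
rewrite IH //; last by apply/allP => a; rewrite mem_filter => /andP [].
congr (_ * _); rewrite big_nat_cond [RHS]big_nat_cond; apply: eq_bigr => u /andP [/andP [_ uM] _].
congr (gfun N p (nseq _ u)); rewrite /mult /lam' count_filter.
by apply: eq_in_count => a _ /=; case: eqP => // ->; rewrite -ltnS uM.
Qed.

Unset Implicit Arguments.

Theorem lemma5p1 (p : nat) (hp : prime p) :
  (forall lam mu : seq nat,
     is_partition lam -> is_partition mu ->
     p_deprived p lam -> p_deprived p mu ->
     (forall a, a \in lam -> a \notin mu) ->
     forall N : nat, gfun N p (pprod lam mu) = gfun N p lam * gfun N p mu)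
  /\
  (forall lam : seq nat, is_partition lam -> p_deprived p lam ->
     forall M : nat, all (fun a => (a <= M)%N) lam ->
     forall N : nat,
       gfun N p lam =
       \prod_(1 <= u < M.+1 | ~~ (p %| u)%N) gfun N p (nseq (mult u lam) u)).
Proof.
split=> [lam mu pl pm dl dm lam_mu N | lam pl dl M lam_M N].
- exact: gfun_pprod.
- exact: gfun_prod_nseq.
Qed.
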